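(* Let $0<q<1$, $m\in\{0,1,2,\dots\}$, $\lambda\in\left]0,q^m(1-q)^{-1}\right[$, and let $\mathcal{G}_X(t)=\sum_{j\ge0}t^jp_j(\lambda;q,m)$ be the probability generating function of $X\sim\mathscr{P}(\lambda;q,m)$ (defined in the context). Then: (1) for $m=0$, $\mathcal{G}_X(t)=\dfrac{((1-q)\lambda;q)_\infty}{((1-q)\lambda t;q)_\infty}$ for real $|t|\le1$; (2) for $m\neq0$ and fixed $\lambda>0$ and real $t$ with $0<|t|\le 1$, \[ \lim_{q\to1^-}\mathcal{G}_X(t)=t^m\exp\big(\lambda(t-1)\big)\,L_m^{(0)}\!\left(\lambda\left(2-\left(t+\tfrac1t\right)\right)\right), \] where $L_m^{(0)}(x)=\sum_{k=0}^m\binom{m}{k}\frac{(-x)^k}{k!}$ is the Laguerre polynomial.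
   Context: For $a\in\mathbb{C}$: $(a;q)_0=1$, $(a;q)_n=\prod_{k=0}^{n-1}(1-aq^k)$, $(a;q)_\infty=\prod_{k\ge0}(1-aq^k)$. The Wall polynomial is $P_n(x;a|q)=\sum_{k=0}^n\frac{(q^{-n};q)_k}{(aq;q)_k}\frac{(qx)^k}{(q;q)_k}$. Write $m\wedge j=\min(m,j)$, $m\vee j=\max(m,j)$, $\binom{n}{2}=n(n-1)/2$. For $0<\lambda<q^m/(1-q)$ set $\mathcal{N}_{q,m}(\lambda)=\frac{(q^{1-m}(1-q)\lambda;q)_m}{q^m\,(q^{-m}(1-q)\lambda;q)_\infty}$ and \[ p_j(\lambda;q,m)=\frac{q^{2\binom{m\wedge j}{2}}(1-q)^{|m-j|}\lambda^{|m-j|}}{\mathcal{N}_{q,m}(\lambda)\,q^{mj}(q;q)_j(q;q)_m}\left(\frac{(q;q)_{m\vee j}}{(q;q)_{|m-j|}}P_{m\wedge j}\big((1-q)\lambda;q^{|m-j|}\,|\,q\big)\right)^2,\quad j=0,1,2,\dots, \] the probability mass function of the generalized Euler distribution $\mathscr{P}(\lambda;q,m)$. Note that $\lambda<q^m/(1-q)$ holds for all $q$ close enough to $1$. *)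

From Stdlib Require Import Reals Factorial.
From Coquelicot Require Import Coquelicot.
Open Scope R_scope.

Fixpoint qpoch (a q : R) (n : nat) : R :=
  match n with
  | O => 1
  | S n' => qpoch a q n' * (1 - a * q ^ n')
  end.

Definition qpoch_inf (a q : R) : R := real (Lim_seq (fun n => qpoch a q n)).

Definition wall (n : nat) (x a q : R) : R :=
  sum_f_R0 (fun k => qpoch (/ q ^ n) q k / qpoch (a * q) q k
                     * (q * x) ^ k / qpoch q q k) n.

Definition binom2 (n : nat) : nat := Nat.div (n * (n - 1)) 2.

Definition absdiff (m j : nat) : nat := Nat.max m j - Nat.min m j.

Definition Nqm (q : R) (m : nat) (lam : R) : R :=
  qpoch (q * / q ^ m * (1 - q) * lam) q m
  / (q ^ m * qpoch_inf (/ q ^ m * (1 - q) * lam) q).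

Definition pj (lam q : R) (m j : nat) : R :=
  let d := absdiff m j in
  let mn := Nat.min m j in
  let mx := Nat.max m j in
  q ^ (2 * binom2 mn) * (1 - q) ^ d * lam ^ d
  / (Nqm q m lam * q ^ (m * j) * qpoch q q j * qpoch q q m)
  * (qpoch q q mx / qpoch q q d * wall mn ((1 - q) * lam) (q ^ d) q) ^ 2.

Definition pgf (lam q : R) (m : nat) (t : R) : R :=
  Series (fun j => t ^ j * pj lam q m j).

Definition laguerre0 (m : nat) (x : R) : R :=
  sum_f_R0 (fun k => INR (fact m) / (INR (fact k) * INR (fact (m - k)))
                     * (- x) ^ k / INR (fact k)) m.

(* For m = 0, p_j = (a;q)_oo a^j / (q;q)_j with a = (1-q) lam, and Euler's identity
   sum_n z^n / (q;q)_n = 1 / (z;q)_oo sums the generating function; the identity follows from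
   the q-difference equation e_q(z) (1 - z) = e_q(qz) of the q-exponential, iterated and
   combined with e_q(q^n z) -> 1.
   For general m, p_j is rewritten with q-factorials and a reduced Wall polynomial, divided
   by N_{q,m}(lam), which tends to e^lam as q -> 1. Term by term, t^j p_j tends to
   e^-lam (lam t)^j C_m(j)^2 / (lam^m m! j!), where C_m is the Charlier polynomial
   sum_k binom(m,k) (-lam)^k j (j-1) ... (j-m+k+1); for q near 1 the terms are dominated by
   a geometric sequence, so Tannery's theorem exchanges limit and sum. The limit series is
   the case m = n, w = lam t of sum_j w^j/j! C_m(j) C_n(j)
   = e^w sum_i binom(m,i) n (n-1) ... (n-i+1) w^i (w - lam)^(m+n-2i),
   proved by induction on m from the recurrences of the C_m, and this is the Laguerre
   polynomial expression. *)

From Stdlib Require Import Reals Lia Lra Factorial.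
From Coquelicot Require Import Coquelicot.
Open Scope R_scope.

(** * Limits along filters and Tannery's theorem *)

Lemma ball_R_Rabs (x e y : R) : ball x e y -> Rabs (y - x) < e.
Proof. easy. Qed.

Lemma Rabs_ball_R (x e y : R) : Rabs (y - x) < e -> ball x e y.
Proof. easy. Qed.

Section FilterLimits.
Context {T : Type} {F : (T -> Prop) -> Prop} {FF : Filter F}.

Lemma filterlim_continuous_comp (f : T -> R) (h : R -> R) x :
  filterlim f F (locally x) -> continuous h x ->
  filterlim (fun y => h (f y)) F (locally (h x)).
Proof. intros Hf Hh; exact (filterlim_comp _ _ _ f h F _ _ Hf Hh). Qed.

Lemma filterlim_Rplus_comp (f g : T -> R) x y :
  filterlim f F (locally x) -> filterlim g F (locally y) ->
  filterlim (fun z => f z + g z) F (locally (x + y)).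
Proof.
  intros Hf Hg; apply (filterlim_comp_2 _ _ Rplus Hf Hg).
  exact (filterlim_plus (V := R_NormedModule) x y).
Qed.

Lemma filterlim_Rmult_comp (f g : T -> R) x y :
  filterlim f F (locally x) -> filterlim g F (locally y) ->
  filterlim (fun z => f z * g z) F (locally (x * y)).
Proof.
  intros Hf Hg; apply (filterlim_comp_2 _ _ Rmult Hf Hg).
  exact (filterlim_mult (K := R_AbsRing) x y).
Qed.

Lemma filterlim_Rinv_comp (f : T -> R) x :
  filterlim f F (locally x) -> x <> 0 -> filterlim (fun z => / f z) F (locally (/ x)).
Proof. intros Hf Hx; exact (filterlim_continuous_comp f Rinv x Hf (continuous_Rinv x Hx)). Qed.

Lemma filterlim_sum_f_R0 (f : T -> nat -> R) (g : nat -> R) :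
  (forall j, filterlim (fun x => f x j) F (locally (g j))) ->
  forall N, filterlim (fun x => sum_f_R0 (f x) N) F (locally (sum_f_R0 g N)).
Proof.
  intros Hlim N; induction N as [|N IH]; [apply Hlim|].
  exact (filterlim_Rplus_comp _ _ _ _ IH (Hlim (S N))).
Qed.

Lemma filterlim_lt_eventually (f : T -> R) l c :
  filterlim f F (locally l) -> c < l -> F (fun x => c < f x).
Proof.
  intros Hf Hc.
  assert (Hd : 0 < l - c) by lra.
  apply (filter_imp (fun x => ball l (mkposreal _ Hd) (f x))).
  - intros x Hx; apply ball_R_Rabs, Rabs_def2 in Hx; simpl in Hx; lra.
  - exact (proj1 (filterlim_locally f l) Hf _).
Qed.

Lemma filterlim_gt_eventually (f : T -> R) l c :
  filterlim f F (locally l) -> l < c -> F (fun x => f x < c).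
Proof.
  intros Hf Hc.
  assert (Hd : 0 < c - l) by lra.
  apply (filter_imp (fun x => ball l (mkposreal _ Hd) (f x))).
  - intros x Hx; apply ball_R_Rabs, Rabs_def2 in Hx; simpl in Hx; lra.
  - exact (proj1 (filterlim_locally f l) Hf _).
Qed.
End FilterLimits.

Lemma continuous_Rplus (f g : R -> R) (x : R) :
  continuous f x -> continuous g x -> continuous (fun y => f y + g y) x.
Proof. exact (continuous_plus (V := R_NormedModule) f g x). Qed.

Lemma continuous_Rminus (f g : R -> R) (x : R) :
  continuous f x -> continuous g x -> continuous (fun y => f y - g y) x.
Proof.
  intros Hf Hg; apply (continuous_Rplus _ _ _ Hf).
  exact (continuous_opp (V := R_NormedModule) g x Hg).
Qed.

Lemma continuous_Rmult (f g : R -> R) (x : R) :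
  continuous f x -> continuous g x -> continuous (fun y => f y * g y) x.
Proof. exact (continuous_mult (K := R_AbsRing) f g x). Qed.

Lemma continuous_Rdiv (f g : R -> R) (x : R) :
  continuous f x -> continuous g x -> g x <> 0 -> continuous (fun y => f y / g y) x.
Proof. intros Hf Hg Hx; apply continuous_Rmult, continuous_Rinv_comp; assumption. Qed.

Lemma continuous_Rpow (f : R -> R) n (x : R) :
  continuous f x -> continuous (fun y => f y ^ n) x.
Proof.
  intro Hf; induction n; simpl; [apply continuous_const|apply continuous_Rmult; assumption].
Qed.

Lemma continuous_sum_f_R0 (f : R -> nat -> R) n (x : R) :
  (forall k, (k <= n)%nat -> continuous (fun y => f y k) x) ->
  continuous (fun y => sum_f_R0 (f y) n) x.
Proof.
  intro Hf; induction n as [|n IH]; simpl; [apply Hf; lia|].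
  apply continuous_Rplus; [apply IH; intros; apply Hf|apply Hf]; lia.
Qed.

Lemma filterlim_at_left_continuous (f : R -> R) (x : R) :
  continuous f x -> filterlim f (at_left x) (locally (f x)).
Proof. intro Hf; eapply filterlim_filter_le_1; [apply filter_le_within|exact Hf]. Qed.

Lemma at_left_interval (c x : R) : c < x -> at_left x (fun y => c < y < x).
Proof.
  intro Hc; assert (Hp : 0 < x - c) by lra; exists (mkposreal _ Hp).
  intros y Hy Hlt; apply ball_R_Rabs, Rabs_def2 in Hy; simpl in Hy; lra.
Qed.

Lemma filterlim_Rabs_le {T} (F : (T -> Prop) -> Prop) {FF : ProperFilter F} (h : T -> R) l B :
  filterlim h F (locally l) -> F (fun x => Rabs (h x) <= B) -> Rabs l <= B.
Proof.
  intros Hh HB.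
  apply (filterlim_le (F := F) (fun x => Rabs (h x)) (fun _ => B) (Rabs l) B HB).
  - exact (filterlim_continuous_comp h Rabs l Hh (continuous_Rabs l)).
  - apply filterlim_const.
Qed.

Lemma Series_tail_Rabs_le (a M : nat -> R) N : ex_series M ->
  (forall j, (N < j)%nat -> Rabs (a j) <= M j) ->
  Rabs (Series a - sum_f_R0 a N) <= Series M - sum_f_R0 M N.
Proof.
  intros HM Ha.
  assert (HMt : ex_series (fun k => M (S N + k)%nat)) by (apply ex_series_incr_n; exact HM).
  assert (Hat_le : forall k, Rabs (a (S N + k)%nat) <= M (S N + k)%nat) by (intro; apply Ha; lia).
  assert (Hat : ex_series (fun k => Rabs (a (S N + k)%nat))).
  { apply (ex_series_le (V := R_CompleteNormedModule) _ (fun k => M (S N + k)%nat));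
      [|exact HMt].
    intro k; rewrite Rabs_Rabsolu; apply Hat_le. }
  assert (Hex : ex_series a) by (apply (ex_series_incr_n a (S N)), ex_series_Rabs, Hat).
  rewrite (Series_incr_n a (S N)), (Series_incr_n M (S N)) by (lia || assumption).
  simpl pred; ring_simplify (sum_f_R0 a N + Series (fun k => a (S N + k)%nat) - sum_f_R0 a N).
  ring_simplify (sum_f_R0 M N + Series (fun k => M (S N + k)%nat) - sum_f_R0 M N).
  eapply Rle_trans; [exact (Series_Rabs _ Hat)|].
  apply Series_le; [|exact HMt]; intro k; split; [apply Rabs_pos | apply Hat_le].
Qed.

Lemma filterlim_Series_dominated {T} (F : (T -> Prop) -> Prop) {FF : ProperFilter F}
  (f : T -> nat -> R) (g M : nat -> R) (J : nat) :
  ex_series M ->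
  (forall j, filterlim (fun x => f x j) F (locally (g j))) ->
  F (fun x => forall j, (J <= j)%nat -> Rabs (f x j) <= M j) ->
  filterlim (fun x => Series (f x)) F (locally (Series g)).
Proof.
  intros HM Hlim Hdom.
  assert (Hg : forall j, (J <= j)%nat -> Rabs (g j) <= M j).
  { intros j Hj; apply (filterlim_Rabs_le F (fun x => f x j)); [apply Hlim|].
    exact (filter_imp _ _ (fun x H => H j Hj) Hdom). }
  apply filterlim_locally; intro eps.
  assert (Heps : 0 < eps / 3) by (destruct eps; simpl; lra).
  assert (HN : exists N, (J <= N)%nat /\ Series M - sum_f_R0 M N < eps / 3).
  { destruct (proj1 (filterlim_locally _ _) (Series_correct _ HM) (mkposreal _ Heps))
      as [N0 HN0].
    exists (J + N0)%nat; split; [lia|].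
    specialize (HN0 (J + N0)%nat ltac:(lia)); apply ball_R_Rabs, Rabs_def2 in HN0.
    rewrite sum_n_Reals in HN0; simpl in HN0; lra. }
  destruct HN as [N [HJN HN]].
  generalize (filter_and _ _ Hdom
    (proj1 (filterlim_locally _ _) (filterlim_sum_f_R0 f g Hlim N) (mkposreal _ Heps))).
  apply filter_imp; intros x [Hfx Hsum]; apply Rabs_ball_R.
  apply ball_R_Rabs, Rabs_def2 in Hsum; simpl in Hsum.
  assert (Tf := Series_tail_Rabs_le (f x) M N HM (fun j Hj => Hfx j ltac:(lia))).
  assert (Tg := Series_tail_Rabs_le g M N HM (fun j Hj => Hg j ltac:(lia))).
  apply Rabs_le_between in Tf; apply Rabs_le_between in Tg.
  apply Rabs_def1; lra.
Qed.

(** * q-integers and Euler's q-exponential *)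

Lemma pow_le_1 x n : 0 <= x <= 1 -> x ^ n <= 1.
Proof. intro Hx; rewrite <- (pow1 n); apply pow_incr; lra. Qed.

Fixpoint qint (q : R) (n : nat) : R :=
  match n with O => 0 | S n' => qint q n' + q ^ n' end.

Fixpoint qfact (q : R) (n : nat) : R :=
  match n with O => 1 | S n' => qfact q n' * qint q (S n') end.

Lemma qint_closed_form q n : (1 - q) * qint q n = 1 - q ^ n.
Proof. induction n as [|n IH]; simpl; [ring|]. rewrite Rmult_plus_distr_l, IH; ring. Qed.

Lemma qpoch_q_q q n : qpoch q q n = (1 - q) ^ n * qfact q n.
Proof.
  induction n as [|n IH]; simpl; [ring|].
  replace (1 - q * q ^ n) with ((1 - q) * qint q (S n)) by (rewrite qint_closed_form; simpl; ring).
  rewrite IH; simpl; ring.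
Qed.

Lemma qint_ge0 q n : 0 <= q -> 0 <= qint q n.
Proof. intro Hq; induction n; simpl; [lra|]. pose proof (pow_le q n Hq); lra. Qed.

Lemma qint_le_mono q n m : 0 <= q -> (n <= m)%nat -> qint q n <= qint q m.
Proof. intros Hq H; induction H; simpl; [lra|]. pose proof (pow_le q m Hq); lra. Qed.

Lemma qint_ge1 q n : 0 <= q -> (1 <= n)%nat -> 1 <= qint q n.
Proof. intros Hq Hn. pose proof (qint_le_mono q 1 n Hq Hn); simpl in *; lra. Qed.

Lemma qint_le q n : 0 <= q <= 1 -> qint q n <= INR n.
Proof.
  intro Hq; induction n as [|n IH]; simpl qint; [simpl; lra|].
  rewrite S_INR; pose proof (pow_le_1 q n Hq); lra.
Qed.

Lemma qfact_ge1 q n : 0 <= q -> 1 <= qfact q n.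
Proof.
  intro Hq; induction n as [|n IH]; simpl; [lra|].
  pose proof (qint_ge1 q (S n) Hq ltac:(lia)); simpl in *; nra.
Qed.

Lemma qfact_pos q n : 0 <= q -> 0 < qfact q n.
Proof. intro Hq; pose proof (qfact_ge1 q n Hq); lra. Qed.

Lemma qpoch_q_q_pos q n : 0 < q < 1 -> 0 < qpoch q q n.
Proof.
  intro Hq; rewrite qpoch_q_q.
  apply Rmult_lt_0_compat; [apply pow_lt; lra|apply qfact_pos; lra].
Qed.

Lemma qint_1 n : qint 1 n = INR n.
Proof.
  induction n as [|n IH]; simpl qint; [reflexivity|].
  rewrite IH, pow1, S_INR; reflexivity.
Qed.

Lemma qfact_1 n : qfact 1 n = INR (fact n).
Proof.
  induction n as [|n IH]; [reflexivity|].
  change (qfact 1 (S n)) with (qfact 1 n * qint 1 (S n)).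
  rewrite IH, qint_1, fact_simpl, mult_INR; ring.
Qed.

Lemma continuous_qint n (x : R) : continuous (fun q => qint q n) x.
Proof.
  induction n; simpl; [apply continuous_const|].
  apply continuous_Rplus, continuous_Rpow, continuous_id; assumption.
Qed.

Lemma continuous_qfact n (x : R) : continuous (fun q => qfact q n) x.
Proof.
  induction n; [apply continuous_const|].
  exact (continuous_Rmult _ _ _ IHn (continuous_qint (S n) x)).
Qed.

Definition qexp (q z : R) : R := Series (fun n => z ^ n / qpoch q q n).

(* Ratio test on [r^n / (q;q)_n] with [|z| <= r < 1] and [r > 0], so that no term vanishes. *)
Lemma ex_series_qexp_Rabs q z : 0 < q < 1 -> Rabs z < 1 ->
  ex_series (fun n => Rabs (z ^ n / qpoch q q n)).
Proof.
  intros Hq Hz.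
  set (r := (1 + Rabs z) / 2).
  assert (Hr : 0 < r < 1) by (unfold r; pose proof (Rabs_pos z); lra).
  assert (Hzr : Rabs z <= r) by (unfold r; lra).
  clearbody r.
  assert (Hratio :
    is_lim_seq (fun n => Rabs (r ^ S n / qpoch q q (S n) / (r ^ n / qpoch q q n))) r).
  { apply is_lim_seq_ext with (u := fun n => r * / (1 - q * q ^ n)).
    - intro n; simpl qpoch; simpl pow.
      pose proof (qpoch_q_q_pos q n Hq); pose proof (pow_lt q n ltac:(lra)).
      pose proof (pow_le_1 q n ltac:(lra)); pose proof (pow_lt r n ltac:(lra)).
      assert (0 < 1 - q * q ^ n) by nra.
      rewrite Rabs_pos_eq; [field; lra|].
      apply Rle_trans with (r * / (1 - q * q ^ n)); [|right; field; lra].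
      apply Rmult_le_pos; [lra|apply Rlt_le, Rinv_0_lt_compat; lra].
    - assert (HL : is_lim_seq (fun n => r * / (1 - q * q ^ n)) (r * / (1 - q * 0))).
      { apply is_lim_seq_mult'; [apply is_lim_seq_const|].
        apply (is_lim_seq_inv _ (1 - q * 0)); [|intro H; injection H; lra].
        apply is_lim_seq_minus'; [apply is_lim_seq_const|].
        apply is_lim_seq_mult'; [apply is_lim_seq_const|].
        apply is_lim_seq_geom; rewrite Rabs_pos_eq; lra. }
      replace (r * / (1 - q * 0)) with r in HL by field; exact HL. }
  assert (Hr_ser := ex_series_DAlembert _ r (proj2 Hr)
    (fun n => Rgt_not_eq _ _ (Rdiv_lt_0_compat _ _ (pow_lt r n (proj1 Hr)) (qpoch_q_q_pos q n Hq)))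
    Hratio).
  refine (ex_series_le (V := R_CompleteNormedModule) _ _ _ Hr_ser).
  intro n; simpl; unfold abs; simpl; rewrite Rabs_Rabsolu.
  pose proof (qpoch_q_q_pos q n Hq).
  unfold Rdiv; rewrite !Rabs_mult, !Rabs_inv, <- !RPow_abs, (Rabs_pos_eq (qpoch q q n)) by lra.
  apply Rmult_le_compat_r; [apply Rlt_le, Rinv_0_lt_compat; lra|].
  apply pow_incr; split; [apply Rabs_pos|]; rewrite (Rabs_pos_eq r); lra.
Qed.

Lemma ex_series_qexp q z : 0 < q < 1 -> Rabs z < 1 -> ex_series (fun n => z ^ n / qpoch q q n).
Proof. intros Hq Hz; apply ex_series_Rabs, ex_series_qexp_Rabs; assumption. Qed.

Lemma Rabs_pow_mul_le q z n : 0 <= q <= 1 -> Rabs (q ^ n * z) <= Rabs z.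
Proof.
  intro Hq; rewrite Rabs_mult, Rabs_pos_eq by (apply pow_le; lra).
  pose proof (pow_le_1 q n ltac:(lra)); pose proof (Rabs_pos z); nra.
Qed.

Lemma qexp_mul_1_sub q z : 0 < q < 1 -> Rabs z < 1 -> qexp q z * (1 - z) = qexp q (q * z).
Proof.
  intros Hq Hz.
  assert (Hqz : Rabs (q * z) < 1)
    by (pose proof (Rabs_pow_mul_le q z 1 ltac:(lra)); rewrite pow_1 in *; lra).
  assert (Hdiff : qexp q z - qexp q (q * z) = z * qexp q z).
  { pose proof (ex_series_qexp q z Hq Hz) as Hez.
    pose proof (ex_series_qexp q (q * z) Hq Hqz) as Heqz.
    unfold qexp; rewrite <- (Series_minus _ _ Hez Heqz), Series_incr_1
      by exact (ex_series_minus (V := R_NormedModule) _ _ Hez Heqz).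
    rewrite <- Series_scal_l; simpl; unfold Rdiv; rewrite Rminus_diag, Rplus_0_l.
    apply Series_ext; intro n; simpl qpoch.
    pose proof (qpoch_q_q_pos q n Hq); pose proof (pow_le_1 q n ltac:(lra)).
    pose proof (pow_lt q n ltac:(lra)).
    assert (0 < 1 - q * q ^ n) by nra.
    rewrite Rpow_mult_distr; simpl; field; lra. }
  lra.
Qed.

Lemma qpoch_mul_qexp q z n : 0 < q < 1 -> Rabs z < 1 ->
  qpoch z q n * qexp q z = qexp q (q ^ n * z).
Proof.
  intros Hq Hz; induction n as [|n IH]; simpl; [now rewrite !Rmult_1_l|].
  replace (q * q ^ n * z) with (q * (q ^ n * z)) by ring.
  rewrite <- (qexp_mul_1_sub q (q ^ n * z)) by
    first [lra | eapply Rle_lt_trans; [apply Rabs_pow_mul_le; lra|assumption]].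
  rewrite <- IH; ring.
Qed.

Lemma qexp_qpow_limit q z : 0 < q < 1 -> Rabs z < 1 ->
  filterlim (fun n => qexp q (q ^ n * z)) eventually (locally 1).
Proof.
  intros Hq Hz.
  assert (Hg : Series (fun k => 0 ^ k / qpoch q q k) = 1).
  { rewrite Series_incr_1 by (apply ex_series_qexp; [|rewrite Rabs_R0]; lra).
    rewrite (Series_ext _ (fun k => 0 * (0 ^ k / qpoch q q (S k)))), Series_scal_l
      by (intro; simpl; unfold Rdiv; ring).
    simpl; field. }
  rewrite <- Hg.
  apply (filterlim_Series_dominated _ _ _ (fun k => Rabs (z ^ k / qpoch q q k)) 0
           (ex_series_qexp_Rabs q z Hq Hz)).
  - intro k; replace (0 ^ k) with ((0 * z) ^ k) by (rewrite Rmult_0_l; reflexivity).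
    apply (filterlim_continuous_comp (fun n => q ^ n) (fun y => (y * z) ^ k / qpoch q q k)).
    + apply is_lim_seq_geom; rewrite Rabs_pos_eq; lra.
    + apply (ex_derive_continuous (V := R_NormedModule)); auto_derive; trivial.
  - apply filter_forall; intros n k _.
    pose proof (qpoch_q_q_pos q k Hq).
    unfold Rdiv; rewrite !Rabs_mult, <- !RPow_abs.
    apply Rmult_le_compat_r; [apply Rabs_pos|].
    apply pow_incr; split; [apply Rabs_pos|apply Rabs_pow_mul_le; lra].
Qed.

Lemma is_lim_seq_qpoch q z : 0 < q < 1 -> Rabs z < 1 ->
  is_lim_seq (fun n => qpoch z q n) (/ qexp q z) /\ qexp q z <> 0.
Proof.
  intros Hq Hz.
  assert (Hlim : filterlim (fun n => qpoch z q n * qexp q z) eventually (locally 1)).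
  { eapply filterlim_ext; [|exact (qexp_qpow_limit q z Hq Hz)].
    intro n; symmetry; apply qpoch_mul_qexp; assumption. }
  assert (Hnz : qexp q z <> 0).
  { intro H0; rewrite H0 in Hlim.
    apply (filterlim_ext _ (fun _ => 0)) in Hlim; [|intro; ring].
    change (is_lim_seq (fun _ => 0) 1) in Hlim.
    apply is_lim_seq_unique in Hlim; rewrite Lim_seq_const in Hlim; injection Hlim; lra. }
  split; [|exact Hnz].
  replace (/ qexp q z) with (1 * / qexp q z) by ring.
  eapply filterlim_ext; [|exact (filterlim_Rmult_comp _ _ _ _ Hlim (filterlim_const (/ qexp q z)))].
  intro n; simpl; field; exact Hnz.
Qed.

Lemma qpoch_inf_eq_inv_qexp q z : 0 < q < 1 -> Rabs z < 1 -> qpoch_inf z q = / qexp q z.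
Proof.
  intros Hq Hz; unfold qpoch_inf.
  now rewrite (is_lim_seq_unique _ _ (proj1 (is_lim_seq_qpoch q z Hq Hz))).
Qed.

Lemma qpoch_inf_neq_0 q z : 0 < q < 1 -> Rabs z < 1 -> qpoch_inf z q <> 0.
Proof.
  intros Hq Hz; rewrite qpoch_inf_eq_inv_qexp by assumption.
  apply Rinv_neq_0_compat, (proj2 (is_lim_seq_qpoch q z Hq Hz)).
Qed.

Lemma is_series_euler q z : 0 < q < 1 -> Rabs z < 1 ->
  is_series (fun n => z ^ n / qpoch q q n) (/ qpoch_inf z q).
Proof.
  intros Hq Hz; rewrite qpoch_inf_eq_inv_qexp, Rinv_inv by assumption.
  apply Series_correct, ex_series_qexp; assumption.
Qed.

Lemma pj_0 lam q j : 0 < q < 1 -> Rabs ((1 - q) * lam) < 1 ->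
  pj lam q 0 j = ((1 - q) * lam) ^ j / qpoch q q j * qpoch_inf ((1 - q) * lam) q.
Proof.
  intros Hq Ha; unfold pj, absdiff, Nqm, wall; simpl Nat.max; simpl Nat.min.
  rewrite Nat.sub_0_r; simpl; rewrite Rinv_1, !Rmult_1_l, Rpow_mult_distr.
  pose proof (qpoch_q_q_pos q j Hq); pose proof (qpoch_inf_neq_0 q _ Hq Ha).
  field; split; lra.
Qed.

Lemma pgf_0 q lam t : 0 < q < 1 -> 0 < lam < 1 / (1 - q) -> Rabs t <= 1 ->
  pgf lam q 0 t = qpoch_inf ((1 - q) * lam) q / qpoch_inf ((1 - q) * lam * t) q.
Proof.
  intros Hq [Hl0 Hl1] Ht.
  assert (Ha : 0 < (1 - q) * lam < 1).
  { split; [apply Rmult_lt_0_compat; lra|].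
    apply (Rmult_lt_compat_l (1 - q)) in Hl1; [|lra].
    replace ((1 - q) * (1 / (1 - q))) with 1 in Hl1 by (field; lra); lra. }
  assert (Hat : Rabs ((1 - q) * lam * t) < 1).
  { rewrite Rabs_mult, Rabs_pos_eq by lra; pose proof (Rabs_pos t); nra. }
  unfold pgf, Rdiv; apply is_series_unique.
  assert (Hterm : forall j, qpoch_inf ((1 - q) * lam) q * (((1 - q) * lam * t) ^ j / qpoch q q j)
                            = t ^ j * pj lam q 0 j).
  { intro j; rewrite pj_0 by (try rewrite Rabs_pos_eq; lra); rewrite Rpow_mult_distr.
    pose proof (qpoch_q_q_pos q j Hq); field; lra. }
  exact (is_series_ext _ _ _ Hterm (is_series_scal_l _ _ _ (is_series_euler q _ Hq Hat))).
Qed.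

(** * The limit [q -> 1] *)

(* Below [D] the bound is crude; from [D] on, every new factor [A / [k]_q] is at most [1/2]. *)
Lemma qfact_geom_bound A q D n : 0 <= A -> 0 <= q -> 2 * A <= qint q D ->
  A ^ n / qfact q n <= (2 * (A + 1)) ^ D * (/ 2) ^ n.
Proof.
  intros HA Hq HD; induction n as [|n IH].
  - simpl; rewrite Rdiv_1_r, Rmult_1_r; apply pow_R1_Rle; lra.
  - destruct (Compare_dec.le_lt_dec (S n) D) as [HnD|HnD].
    + apply Rle_trans with ((2 * (A + 1)) ^ S n * (/ 2) ^ S n).
      * rewrite <- Rpow_mult_distr, Rmult_comm, <- Rmult_assoc, Rinv_l, Rmult_1_l by lra.
        apply Rle_trans with (A ^ S n); [|apply pow_incr; lra].
        pose proof (qfact_ge1 q (S n) Hq); pose proof (pow_le A (S n) HA).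
        unfold Rdiv; rewrite <- (Rmult_1_r (A ^ S n)) at 2.
        apply Rmult_le_compat_l; [lra|].
        rewrite <- Rinv_1; apply Rinv_le_contravar; lra.
      * apply Rmult_le_compat_r; [apply pow_le; lra|apply Rle_pow; [lra|exact HnD]].
    + pose proof (qint_ge1 q (S n) Hq ltac:(lia)).
      pose proof (qint_le_mono q D (S n) Hq ltac:(lia)).
      pose proof (qfact_pos q n Hq).
      change (A ^ S n / qfact q (S n)) with (A * A ^ n / (qfact q n * qint q (S n))).
      replace (A * A ^ n / (qfact q n * qint q (S n)))
        with (A ^ n / qfact q n * (A / qint q (S n))) by (field; lra).
      replace ((2 * (A + 1)) ^ D * (/ 2) ^ S n) with ((2 * (A + 1)) ^ D * (/ 2) ^ n * / 2)
        by (simpl; ring).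
      apply Rmult_le_compat; [apply Rmult_le_pos, Rlt_le, Rinv_0_lt_compat; [apply pow_le|]; lra
                             |apply Rmult_le_pos, Rlt_le, Rinv_0_lt_compat; lra|exact IH|].
      apply Rmult_le_reg_r with (qint q (S n)); [lra|].
      unfold Rdiv; rewrite Rmult_assoc, Rinv_l; lra.
Qed.

Lemma qfact_geom_eventually A : 0 <= A ->
  exists K, at_left 1 (fun q => forall n, A ^ n / qfact q n <= K * (/ 2) ^ n).
Proof.
  intro HA; destruct (INR_archimed 1 (2 * A)) as [D HD]; [lra|].
  exists ((2 * (A + 1)) ^ D).
  assert (Hlim : filterlim (fun q => qint q D) (at_left 1) (locally (INR D))).
  { rewrite <- qint_1; apply filterlim_at_left_continuous, continuous_qint. }
  generalize (filter_and _ _ (at_left_interval 0 1 Rlt_0_1)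
                (filterlim_lt_eventually _ _ (2 * A) Hlim ltac:(lra))).
  apply filter_imp; intros q [Hq HqD] n.
  apply qfact_geom_bound; lra.
Qed.

Lemma is_series_exp x : is_series (fun n => x ^ n / INR (fact n)) (exp x).
Proof.
  apply (is_series_ext (fun n => scal (pow_n x n) (/ INR (fact n)))), is_exp_Reals.
  intro n; rewrite pow_n_pow; reflexivity.
Qed.

Lemma qexp_scaled_limit (a : R -> R) a0 : filterlim a (at_left 1) (locally a0) ->
  filterlim (fun q => qexp q ((1 - q) * a q)) (at_left 1) (locally (exp a0)).
Proof.
  intro Ha.
  set (A := Rabs a0 + 1).
  destruct (qfact_geom_eventually A ltac:(unfold A; pose proof (Rabs_pos a0); lra)) as [K HK].
  assert (Hser : at_left 1
    (fun q => Series (fun n => a q ^ n / qfact q n) = qexp q ((1 - q) * a q))).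
  { generalize (at_left_interval 0 1 Rlt_0_1); apply filter_imp; intros q Hq.
    apply Series_ext; intro n; rewrite qpoch_q_q, Rpow_mult_distr.
    pose proof (qfact_pos q n ltac:(lra)); pose proof (pow_lt (1 - q) n ltac:(lra)).
    field; lra. }
  apply (filterlim_ext_loc _ _ Hser); rewrite <- (is_series_unique _ _ (is_series_exp a0)).
  apply (filterlim_Series_dominated _ _ _ (fun n => K * (/ 2) ^ n) 0).
  - apply (ex_series_scal_l (V := R_NormedModule)); eexists; apply is_series_geom.
    rewrite Rabs_pos_eq; lra.
  - intro n; rewrite <- qfact_1.
    apply filterlim_Rmult_comp.
    + exact (filterlim_continuous_comp a (fun y => y ^ n) a0 Ha
               (continuous_Rpow _ n _ (continuous_id a0))).
    + apply filterlim_Rinv_comp; [|rewrite qfact_1; apply INR_fact_neq_0].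
      apply filterlim_at_left_continuous, continuous_qfact.
  - assert (HaA : at_left 1 (fun q => Rabs (a q) < A)).
    { apply (filterlim_gt_eventually _ (Rabs a0)); [|unfold A; lra].
      exact (filterlim_continuous_comp a Rabs a0 Ha (continuous_Rabs a0)). }
    generalize (filter_and _ _ (filter_and _ _ HK HaA) (at_left_interval 0 1 Rlt_0_1)).
    apply filter_imp; intros q [[HKq Haq] Hq] n _.
    eapply Rle_trans; [|apply HKq].
    pose proof (qfact_pos q n ltac:(lra)).
    unfold Rdiv; rewrite Rabs_mult, Rabs_inv, <- RPow_abs, (Rabs_pos_eq (qfact q n)) by lra.
    apply Rmult_le_compat_r; [apply Rlt_le, Rinv_0_lt_compat; lra|].
    apply pow_incr; split; [apply Rabs_pos|lra].
Qed.

Lemma qpoch_inf_scaled_limit (a : R -> R) a0 : filterlim a (at_left 1) (locally a0) ->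
  filterlim (fun q => qpoch_inf ((1 - q) * a q) q) (at_left 1) (locally (exp (- a0))).
Proof.
  intro Ha.
  assert (Hz : at_left 1 (fun q => Rabs ((1 - q) * a q) < 1)).
  { apply (filterlim_gt_eventually _ (Rabs ((1 - 1) * a0)));
    [|rewrite Rminus_diag, Rmult_0_l, Rabs_R0; lra].
    apply (filterlim_continuous_comp (fun q => (1 - q) * a q) Rabs); [|apply continuous_Rabs].
    apply filterlim_Rmult_comp; [|exact Ha].
    apply (filterlim_at_left_continuous (fun q => 1 - q)).
    apply (ex_derive_continuous (V := R_NormedModule)).
    auto_derive; trivial. }
  assert (Heq : at_left 1 (fun q => / qexp q ((1 - q) * a q) = qpoch_inf ((1 - q) * a q) q)).
  { generalize (filter_and _ _ Hz (at_left_interval 0 1 Rlt_0_1)); apply filter_imp.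
    intros q [Hzq Hq]; symmetry; apply qpoch_inf_eq_inv_qexp; assumption. }
  apply (filterlim_ext_loc _ _ Heq); rewrite exp_Ropp.
  apply filterlim_Rinv_comp, Rgt_not_eq, exp_pos; apply qexp_scaled_limit, Ha.
Qed.

Lemma continuous_qpoch (e : R -> R) m (x : R) :
  continuous e x -> continuous (fun q => qpoch (e q) q m) x.
Proof.
  intro He; induction m as [|m IH]; [apply continuous_const|].
  apply (continuous_Rmult _ _ _ IH), continuous_Rminus; [apply continuous_const|].
  apply continuous_Rmult, continuous_Rpow, continuous_id; exact He.
Qed.

Lemma qpoch_0 q m : qpoch 0 q m = 1.
Proof. induction m as [|m IH]; simpl; [reflexivity|]; rewrite IH; ring. Qed.

Lemma inv_Nqm_limit m lam :
  filterlim (fun q => / Nqm q m lam) (at_left 1) (locally (exp (- lam))).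
Proof.
  set (e := fun q : R => q * / q ^ m * (1 - q) * lam).
  assert (Hnum : filterlim (fun q => q ^ m * qpoch_inf ((1 - q) * (lam / q ^ m)) q)
                   (at_left 1) (locally (1 * exp (- lam)))).
  { apply filterlim_Rmult_comp.
    - rewrite <- (pow1 m) at 2.
      apply (filterlim_at_left_continuous (fun q => q ^ m)), continuous_Rpow, continuous_id.
    - apply qpoch_inf_scaled_limit.
      assert (Hc : continuous (fun q => lam / q ^ m) 1).
      { apply (ex_derive_continuous (V := R_NormedModule)); auto_derive; rewrite pow1; lra. }
      pose proof (filterlim_at_left_continuous _ _ Hc) as Hl.
      cbv beta in Hl; rewrite pow1, Rdiv_1_r in Hl; exact Hl. }
  assert (Hden : filterlim (fun q => qpoch (e q) q m) (at_left 1) (locally 1)).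
  { assert (He : continuous e 1).
    { apply (ex_derive_continuous (V := R_NormedModule)); unfold e; auto_derive.
      rewrite pow1; lra. }
    pose proof (filterlim_at_left_continuous _ _ (continuous_qpoch e m 1 He)) as Hl.
    cbv beta in Hl; replace (e 1) with 0 in Hl by (unfold e; ring).
    rewrite qpoch_0 in Hl; exact Hl. }
  replace (exp (- lam)) with (1 * exp (- lam) / 1) by field.
  eapply filterlim_ext;
    [|exact (filterlim_Rmult_comp _ _ _ _ Hnum (filterlim_Rinv_comp _ _ Hden R1_neq_R0))].
  intro q; unfold Nqm, e; rewrite Rinv_div.
  replace (/ q ^ m * (1 - q) * lam) with ((1 - q) * (lam / q ^ m)) by (unfold Rdiv; ring).
  reflexivity.
Qed.

(** * The probability mass function in reduced form *)

Fixpoint qrising (q : R) (a b : nat) : R :=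
  match b with O => 1 | S b' => qrising q a b' * qint q (a + S b') end.

(* Defined so that [(q^-m; q)_k = (1 - q)^k * neg_qfalling q m k] for [k <= m]. *)
Fixpoint neg_qfalling (q : R) (m k : nat) : R :=
  match k with
  | O => 1
  | S k' => neg_qfalling q m k' * (- qint q (m - k') / q ^ (m - k'))
  end.

(* Defined so that
   [(q;q)_(d+n) / (q;q)_d * P_n((1-q) lam; q^d | q) = (1 - q)^n * wall_red q lam n d]. *)
Definition wall_red (q lam : R) (n d : nat) : R :=
  sum_f_R0 (fun k => neg_qfalling q n k * qrising q (d + k) (n - k) * q ^ k * lam ^ k
                     / qfact q k) n.

Lemma qrising_ge1 q a b : 0 <= q -> 1 <= qrising q a b.
Proof.
  intro Hq; induction b as [|b IH]; simpl; [lra|].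
  pose proof (qint_ge1 q (a + S b) Hq ltac:(lia)); nra.
Qed.

Lemma qrising_add q a b c : qrising q a (b + c) = qrising q a b * qrising q (a + b) c.
Proof.
  induction c as [|c IH]; [rewrite Nat.add_0_r; simpl; ring|].
  rewrite Nat.add_succ_r; simpl; rewrite IH.
  replace (a + S (b + c))%nat with (a + b + S c)%nat by lia; ring.
Qed.

Lemma qfact_add q a b : qfact q (a + b) = qfact q a * qrising q a b.
Proof.
  induction b as [|b IH]; [rewrite Nat.add_0_r; simpl; ring|].
  rewrite Nat.add_succ_r.
  change (qfact q (S (a + b))) with (qfact q (a + b) * qint q (S (a + b))).
  change (qrising q a (S b)) with (qrising q a b * qint q (a + S b)).
  rewrite IH, <- Nat.add_succ_r; ring.
Qed.

Lemma qpoch_q_q_add q a b : qpoch q q (a + b) = qpoch q q a * (1 - q) ^ b * qrising q a b.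
Proof. rewrite !qpoch_q_q, qfact_add, pow_add; ring. Qed.

Lemma qpoch_qpow_succ q d k : qpoch (q ^ d * q) q k = (1 - q) ^ k * qrising q d k.
Proof.
  induction k as [|k IH]; simpl; [ring|]; rewrite IH.
  replace (1 - q ^ d * q * q ^ k) with ((1 - q) * qint q (d + S k))
    by (rewrite qint_closed_form, pow_add; simpl; ring).
  ring.
Qed.

Lemma qpoch_inv_pow q m k : 0 < q -> (k <= m)%nat ->
  qpoch (/ q ^ m) q k = (1 - q) ^ k * neg_qfalling q m k.
Proof.
  intro Hq; induction k as [|k IH]; intro Hk; simpl; [ring|]; rewrite IH by lia.
  assert (Hm : q ^ m = q ^ (m - k) * q ^ k) by (rewrite <- pow_add; f_equal; lia).
  pose proof (pow_lt q (m - k) Hq); pose proof (pow_lt q k Hq).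
  pose proof (qint_closed_form q (m - k)).
  rewrite Hm; replace (q ^ (m - k)) with (1 - (1 - q) * qint q (m - k)) by lra.
  simpl; field; lra.
Qed.

Lemma wall_eq q lam n d : 0 < q < 1 ->
  qpoch q q (d + n) / qpoch q q d * wall n ((1 - q) * lam) (q ^ d) q
  = (1 - q) ^ n * wall_red q lam n d.
Proof.
  intro Hq; unfold wall, wall_red; rewrite !scal_sum; apply sum_eq; intros k Hk.
  rewrite qpoch_inv_pow, qpoch_qpow_succ by (lra || lia).
  replace (d + n)%nat with ((d + k) + (n - k))%nat by lia.
  rewrite (qpoch_q_q_add q (d + k) (n - k)), (qpoch_q_q_add q d k), (qpoch_q_q q k).
  replace ((1 - q) ^ n) with ((1 - q) ^ (n - k) * (1 - q) ^ k)
    by (rewrite <- pow_add; f_equal; lia).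
  pose proof (qpoch_q_q_pos q d Hq); pose proof (qrising_ge1 q d k ltac:(lra)).
  pose proof (qfact_pos q k ltac:(lra)); pose proof (pow_lt (1 - q) k ltac:(lra)).
  rewrite !Rpow_mult_distr; field; lra.
Qed.

Definition pj_num (lam : R) (m j : nat) (q : R) : R :=
  q ^ (2 * binom2 (Nat.min m j)) * lam ^ absdiff m j
  * wall_red q lam (Nat.min m j) (absdiff m j) ^ 2
  / (q ^ (m * j) * qfact q j * qfact q m).

Lemma pj_eq lam q m j : 0 < q < 1 -> pj lam q m j = / Nqm q m lam * pj_num lam m j q.
Proof.
  intro Hq; unfold pj, pj_num; cbv zeta.
  assert (Hmx : Nat.max m j = (absdiff m j + Nat.min m j)%nat) by (unfold absdiff; lia).
  assert (Hp : (1 - q) ^ j * (1 - q) ^ m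
               = (1 - q) ^ absdiff m j * ((1 - q) ^ Nat.min m j) ^ 2).
  { rewrite <- pow_mult, <- !pow_add; f_equal; unfold absdiff; lia. }
  rewrite Hmx, wall_eq, !(qpoch_q_q q j), !(qpoch_q_q q m) by assumption.
  pose proof (qfact_pos q j ltac:(lra)); pose proof (qfact_pos q m ltac:(lra)).
  pose proof (pow_lt q (m * j) ltac:(lra)).
  pose proof (pow_lt (1 - q) (absdiff m j) ltac:(lra)).
  pose proof (pow_lt (1 - q) (Nat.min m j) ltac:(lra)).
  pose proof (pow_lt (1 - q) m ltac:(lra)).
  assert (Hj : (1 - q) ^ j = (1 - q) ^ absdiff m j * ((1 - q) ^ Nat.min m j) ^ 2 / (1 - q) ^ m)
    by (rewrite <- Hp; field; lra).
  unfold Rdiv; rewrite !Rinv_mult, Hj, Rpow_mult_distr.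
  set (IN := / Nqm q m lam); clearbody IN.
  field; repeat split; lra.
Qed.

(** * Charlier polynomials *)

Lemma sum_f_R0_rev (f : nat -> R) n : sum_f_R0 f n = sum_f_R0 (fun k => f (n - k)%nat) n.
Proof.
  induction n as [|n IH]; [reflexivity|].
  rewrite tech5, IH, (decomp_sum (fun k => f (S n - k)%nat)) by lia.
  simpl pred; rewrite Nat.sub_0_r, Rplus_comm; reflexivity.
Qed.

Lemma sum_f_R0_zero_tail (f : nat -> R) n N : (n <= N)%nat ->
  (forall k, (n < k <= N)%nat -> f k = 0) -> sum_f_R0 f N = sum_f_R0 f n.
Proof.
  intros H Hz; induction H as [|N H IH]; [reflexivity|].
  rewrite tech5, IH, Hz by (try intros; try apply Hz; lia); ring.
Qed.

Lemma sum_f_R0_zero_head (h : nat -> R) a b : (forall k, (k < a)%nat -> h k = 0) ->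
  sum_f_R0 h (a + b) = sum_f_R0 (fun r => h (a + r)%nat) b.
Proof.
  intro Hz; induction b as [|b IH].
  - rewrite Nat.add_0_r; destruct a as [|a]; [reflexivity|].
    rewrite tech5, (sum_eq _ (fun _ => 0)), sum_cte by (intros; apply Hz; lia).
    simpl; rewrite Nat.add_0_r; ring.
  - rewrite Nat.add_succ_r, tech5, IH, <- Nat.add_succ_r; reflexivity.
Qed.

Lemma sum_f_R0_pascal (a b c : nat -> R) N : a O = b O ->
  (forall k, a (S k) = b (S k) + c k) ->
  sum_f_R0 a (S N) = sum_f_R0 b (S N) + sum_f_R0 c N.
Proof.
  intros H0 HS; induction N as [|N IH]; [simpl; rewrite H0, HS; ring|].
  rewrite tech5, IH, (tech5 b (S N)), (tech5 c N), HS; ring.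
Qed.

Fixpoint falling (x : R) (k : nat) : R :=
  match k with O => 1 | S k' => x * falling (x - 1) k' end.

Lemma falling_S_r x k : falling x (S k) = falling x k * (x - INR k).
Proof.
  revert x; induction k as [|k IH]; intro x; [simpl; ring|].
  change (falling x (S (S k))) with (x * falling (x - 1) (S k)).
  rewrite IH, S_INR; simpl; ring.
Qed.

Lemma falling_add1 x r : falling (x + 1) (S r) = falling x (S r) + INR (S r) * falling x r.
Proof.
  change (falling (x + 1) (S r)) with ((x + 1) * falling (x + 1 - 1) r).
  replace (x + 1 - 1) with x by ring; rewrite falling_S_r, S_INR; ring.
Qed.

Lemma falling_INR_S n k : falling (INR (S n)) (S k) = INR (S n) * falling (INR n) k.
Proof.
  change (falling (INR (S n)) (S k)) with (INR (S n) * falling (INR (S n) - 1) k).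
  rewrite (S_INR n) at 2; replace (INR n + 1 - 1) with (INR n) by ring; reflexivity.
Qed.

Lemma falling_INR_lt n k : (n < k)%nat -> falling (INR n) k = 0.
Proof.
  revert k; induction n as [|n IH]; intros [|k] Hk; try lia; [simpl; ring|].
  rewrite falling_INR_S, IH by lia; ring.
Qed.

Lemma falling_INR n k : (k <= n)%nat -> falling (INR n) k = INR (fact n) / INR (fact (n - k)).
Proof.
  revert n; induction k as [|k IH]; intros n Hk.
  - rewrite Nat.sub_0_r; simpl; field; apply INR_fact_neq_0.
  - destruct n as [|n]; [lia|].
    rewrite falling_INR_S, IH by lia; simpl (S n - S k)%nat.
    rewrite fact_simpl, mult_INR; field; apply INR_fact_neq_0.
Qed.

Definition binomR (m k : nat) : R := falling (INR m) k / INR (fact k).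

Lemma binomR_0 m : binomR m 0 = 1.
Proof. unfold binomR; simpl; field. Qed.

Lemma binomR_lt m k : (m < k)%nat -> binomR m k = 0.
Proof. intro H; unfold binomR; rewrite falling_INR_lt by exact H; unfold Rdiv; ring. Qed.

Lemma binomR_fact m k : (k <= m)%nat ->
  binomR m k = INR (fact m) / (INR (fact k) * INR (fact (m - k))).
Proof.
  intro H; unfold binomR; rewrite falling_INR by exact H.
  pose proof (INR_fact_neq_0 k); pose proof (INR_fact_neq_0 (m - k)); field; auto.
Qed.

Lemma binomR_pascal m k : binomR (S m) (S k) = binomR m (S k) + binomR m k.
Proof.
  unfold binomR; rewrite S_INR, falling_add1, fact_simpl, mult_INR.
  pose proof (INR_fact_neq_0 k); pose proof (not_0_INR (S k) (Nat.neq_succ_0 k)).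
  field; auto.
Qed.

Lemma binomR_absorb n k : binomR (S n) k * INR (S n - k) = INR (S n) * binomR n k.
Proof.
  destruct (Compare_dec.le_lt_dec k n) as [Hk|Hk].
  - rewrite !binomR_fact by lia; replace (S n - k)%nat with (S (n - k)) by lia.
    rewrite !fact_simpl, !mult_INR.
    pose proof (INR_fact_neq_0 k); pose proof (INR_fact_neq_0 (n - k)).
    pose proof (not_0_INR _ (Nat.neq_succ_0 (n - k))).
    field; auto.
  - rewrite (binomR_lt n k) by lia.
    destruct (Nat.eq_dec k (S n)) as [->|Hk']; [rewrite Nat.sub_diag; simpl; ring|].
    rewrite binomR_lt by lia; ring.
Qed.

Section Charlier.
Variable lam : R.

Definition charlier (m : nat) (x : R) : R :=
  sum_f_R0 (fun k => binomR m k * (- lam) ^ k * falling x (m - k)) m.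

Lemma charlier_0 x : charlier 0 x = 1.
Proof. unfold charlier; simpl; rewrite binomR_0; ring. Qed.

Lemma charlier_S m x : charlier (S m) x = x * charlier m (x - 1) - lam * charlier m x.
Proof.
  unfold charlier at 1.
  rewrite (sum_f_R0_pascal _ (fun k => binomR m k * (- lam) ^ k * falling x (S m - k))
             (fun k => binomR m k * (- lam) ^ S k * falling x (S m - S k)));
    [|rewrite !binomR_0; reflexivity|intro k; rewrite binomR_pascal; ring].
  rewrite tech5, (binomR_lt m (S m)), Rmult_0_l, Rmult_0_l, Rplus_0_r by lia.
  replace (sum_f_R0 (fun k => binomR m k * (- lam) ^ k * falling x (S m - k)) m)
    with (x * charlier m (x - 1)).
  - replace (sum_f_R0 (fun k => binomR m k * (- lam) ^ S k * falling x (S m - S k)) m)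
      with (- lam * charlier m x); [ring|].
    unfold charlier; rewrite scal_sum; apply sum_eq; intros k Hk; simpl; ring.
  - unfold charlier; rewrite scal_sum; apply sum_eq; intros k Hk.
    replace (S m - k)%nat with (S (m - k)) by lia; simpl; ring.
Qed.

Lemma charlier_add1 n x : charlier n (x + 1) = INR n * charlier (pred n) x + charlier n x.
Proof.
  destruct n as [|n]; [rewrite !charlier_0; simpl; ring|].
  unfold charlier; simpl pred.
  rewrite (tech5 (fun k => binomR (S n) k * (- lam) ^ k * falling (x + 1) (S n - k))),
          (tech5 (fun k => binomR (S n) k * (- lam) ^ k * falling x (S n - k))), !Nat.sub_diag.
  rewrite (sum_eq _ (fun k => binomR n k * (- lam) ^ k * falling x (n - k) * INR (S n)
                              + binomR (S n) k * (- lam) ^ k * falling x (S n - k))).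
  - rewrite sum_plus, <- scal_sum; simpl falling; ring.
  - intros k Hk; replace (S n - k)%nat with (S (n - k)) by lia.
    rewrite falling_add1.
    replace (binomR n k * (- lam) ^ k * falling x (n - k) * INR (S n))
      with (INR (S n) * binomR n k * (- lam) ^ k * falling x (n - k)) by ring.
    rewrite <- binomR_absorb; replace (S n - k)%nat with (S (n - k)) by lia; ring.
Qed.

Lemma charlier_sym m j : (j <= m)%nat ->
  charlier m (INR j) = (- lam) ^ (m - j) * charlier j (INR m).
Proof.
  intro Hjm; unfold charlier.
  set (f := fun k => binomR m k * (- lam) ^ k * falling (INR j) (m - k)).
  replace (sum_f_R0 f m) with (sum_f_R0 f (m - j + j)) by (f_equal; lia).
  rewrite sum_f_R0_zero_head by (intros k Hk; unfold f; rewrite falling_INR_lt by lia; ring).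
  unfold f.
  rewrite scal_sum; apply sum_eq; intros r Hr.
  rewrite pow_add; unfold binomR; rewrite !falling_INR by lia.
  replace (m - (m - j + r))%nat with (j - r)%nat by lia.
  replace (j - (j - r))%nat with r by lia; replace (m - (j - r))%nat with (m - j + r)%nat by lia.
  pose proof (INR_fact_neq_0 r); pose proof (INR_fact_neq_0 (j - r)).
  pose proof (INR_fact_neq_0 (m - j + r)).
  field; auto.
Qed.

End Charlier.

Section CharlierProduct.
Variables lam w : R.

Definition charlier_term (m n j : nat) : R :=
  w ^ j / INR (fact j) * charlier lam m (INR j) * charlier lam n (INR j).

Definition charlier_prod_sum (m n : nat) : R :=
  exp w * sum_f_R0 (fun i => binomR m i * falling (INR n) i * w ^ i
                             * (w - lam) ^ (m + n - 2 * i)) m.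

Lemma charlier_prod_sum_0_l n : charlier_prod_sum 0 n = exp w * (w - lam) ^ n.
Proof. unfold charlier_prod_sum; simpl; rewrite binomR_0, Nat.sub_0_r; ring. Qed.

Lemma charlier_prod_sum_0_r m : charlier_prod_sum m 0 = exp w * (w - lam) ^ m.
Proof.
  unfold charlier_prod_sum; rewrite (sum_f_R0_zero_tail _ 0 m) by
    (try intros k Hk; try rewrite (falling_INR_lt 0 k) by lia; lia || ring).
  simpl; rewrite binomR_0, Nat.add_0_r, Nat.sub_0_r; ring.
Qed.

Lemma charlier_prod_sum_S m n : charlier_prod_sum (S m) n
  = (w - lam) * charlier_prod_sum m n + INR n * w * charlier_prod_sum m (pred n).
Proof.
  unfold charlier_prod_sum.
  set (F := fun i => falling (INR n) i * w ^ i * (w - lam) ^ (S m + n - 2 * i)).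
  rewrite (sum_eq _ (fun i => binomR (S m) i * F i)) by (intros; unfold F; ring).
  rewrite (sum_f_R0_pascal _ (fun i => binomR m i * F i) (fun i => binomR m i * F (S i)));
    [|rewrite !binomR_0; reflexivity|intro k; rewrite binomR_pascal; ring].
  rewrite tech5, (binomR_lt m (S m)), Rmult_0_l, Rplus_0_r by lia.
  replace (sum_f_R0 (fun i => binomR m i * F i) m) with
    ((w - lam) * sum_f_R0 (fun i => binomR m i * falling (INR n) i * w ^ i
                                    * (w - lam) ^ (m + n - 2 * i)) m).
  2:{ rewrite scal_sum; apply sum_eq; intros i Hi; unfold F.
      destruct (Compare_dec.le_lt_dec i n) as [Hin|Hin]; [|rewrite falling_INR_lt by lia; ring].
      replace (S m + n - 2 * i)%nat with (S (m + n - 2 * i)) by lia; simpl; ring. }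
  replace (sum_f_R0 (fun i => binomR m i * F (S i)) m) with
    (INR n * w * sum_f_R0 (fun i => binomR m i * falling (INR (pred n)) i * w ^ i
                                    * (w - lam) ^ (m + pred n - 2 * i)) m); [ring|].
  rewrite scal_sum; apply sum_eq; intros i Hi; unfold F.
  destruct n as [|n]; [rewrite (falling_INR_lt 0 (S i)) by lia; simpl; ring|].
  rewrite falling_INR_S; simpl pred.
  replace (S m + S n - 2 * S i)%nat with (m + n - 2 * i)%nat by lia; simpl; ring.
Qed.

Lemma charlier_term_S m n i : charlier_term (S m) n (S i)
  = w * (INR n * charlier_term m (pred n) i + charlier_term m n i) - lam * charlier_term m n (S i).
Proof.
  unfold charlier_term; rewrite charlier_S, S_INR, (charlier_add1 lam n).
  replace (INR i + 1 - 1) with (INR i) by ring.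
  rewrite fact_simpl, mult_INR, S_INR; simpl pow.
  pose proof (INR_fact_neq_0 i); pose proof (pos_INR i).
  field; lra.
Qed.

Lemma charlier_term_S_0 m n : charlier_term (S m) n 0 = - lam * charlier_term m n 0.
Proof. unfold charlier_term; rewrite charlier_S; simpl INR; ring. Qed.

Lemma charlier_term_comm m n j : charlier_term m n j = charlier_term n m j.
Proof. unfold charlier_term; ring. Qed.

Lemma is_series_charlier_term_S m n :
  is_series (charlier_term m n) (charlier_prod_sum m n) ->
  is_series (charlier_term m (pred n)) (charlier_prod_sum m (pred n)) ->
  is_series (charlier_term (S m) n) (charlier_prod_sum (S m) n).
Proof.
  intros H1 H2.
  set (b := fun j => match j with
                     | O => 0
                     | S i => w * (INR n * charlier_term m (pred n) i + charlier_term m n i)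
                     end).
  set (L := w * (INR n * charlier_prod_sum m (pred n) + charlier_prod_sum m n)).
  assert (Hb : is_series b L).
  { apply is_series_decr_1; change (plus L (opp (b O))) with (L + - 0).
    rewrite Ropp_0, Rplus_0_r.
    exact (is_series_scal_l w _ _ (is_series_plus _ _ _ _ (is_series_scal_l (INR n) _ _ H2) H1)). }
  rewrite charlier_prod_sum_S.
  replace ((w - lam) * charlier_prod_sum m n + INR n * w * charlier_prod_sum m (pred n)) with
    (L - lam * charlier_prod_sum m n) by (unfold L; ring).
  assert (Hext : forall j, b j - lam * charlier_term m n j = charlier_term (S m) n j).
  { intros [|j]; simpl b; [rewrite charlier_term_S_0|rewrite charlier_term_S]; ring. }
  exact (is_series_ext _ _ _ Hext (is_series_minus _ _ _ _ Hb (is_series_scal_l lam _ _ H1))).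
Qed.

Lemma is_series_charlier_term m n : is_series (charlier_term m n) (charlier_prod_sum m n).
Proof.
  revert n; induction m as [|m IHm]; [|intro n; apply is_series_charlier_term_S; apply IHm].
  induction n as [|n IHn].
  - rewrite charlier_prod_sum_0_l; simpl; rewrite Rmult_1_r.
    assert (H0 : forall j, w ^ j / INR (fact j) = charlier_term 0 0 j)
      by (intro j; unfold charlier_term; rewrite charlier_0; ring).
    exact (is_series_ext _ _ _ H0 (is_series_exp w)).
  - assert (H : is_series (charlier_term n 0) (charlier_prod_sum n 0)).
    { rewrite charlier_prod_sum_0_r, <- charlier_prod_sum_0_l.
      apply (is_series_ext (charlier_term 0 n)); [intro; apply charlier_term_comm|exact IHn]. }
    pose proof (is_series_charlier_term_S n 0 H H) as H'.
    rewrite charlier_prod_sum_0_r, <- charlier_prod_sum_0_l in H'.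
    apply (is_series_ext (charlier_term (S n) 0)); [intro; apply charlier_term_comm|exact H'].
Qed.

End CharlierProduct.

Lemma charlier_prod_sum_laguerre lam t m : 0 < lam -> t <> 0 ->
  exp (- lam) * / lam ^ m * / INR (fact m) * charlier_prod_sum lam (lam * t) m m
  = t ^ m * exp (lam * (t - 1)) * laguerre0 m (lam * (2 - (t + / t))).
Proof.
  intros Hl Ht; unfold charlier_prod_sum, laguerre0.
  rewrite sum_f_R0_rev.
  replace (exp (lam * (t - 1))) with (exp (- lam) * exp (lam * t))
    by (rewrite <- exp_plus; f_equal; ring).
  match goal with |- _ = _ * ?S => set (L := S) end.
  match goal with |- _ * (_ * ?S) = _ => set (C := S) end.
  transitivity (exp (- lam) * exp (lam * t) * (/ lam ^ m * / INR (fact m) * C)); [ring|].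
  transitivity (exp (- lam) * exp (lam * t) * (t ^ m * L)); [|ring].
  f_equal; unfold C, L.
  rewrite !scal_sum; apply sum_eq; intros k Hk.
  unfold binomR; rewrite !falling_INR by lia.
  replace (m - (m - k))%nat with k by lia.
  replace (m + m - 2 * (m - k))%nat with (2 * k)%nat by lia.
  replace (- (lam * (2 - (t + / t)))) with (lam * ((t - 1) ^ 2 / t)) by (field; auto).
  replace (lam ^ m) with (lam ^ (m - k) * lam ^ k) by (rewrite <- pow_add; f_equal; lia).
  replace (t ^ m) with (t ^ (m - k) * t ^ k) by (rewrite <- pow_add; f_equal; lia).
  rewrite pow_mult; replace ((lam * t - lam) ^ 2) with (lam ^ 2 * (t - 1) ^ 2) by ring.
  unfold Rdiv; rewrite !Rpow_mult_distr, pow_inv, <- pow_mult.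
  replace (lam ^ (2 * k)) with (lam ^ k * lam ^ k) by (rewrite <- pow_add; f_equal; lia).
  pose proof (INR_fact_neq_0 k); pose proof (INR_fact_neq_0 (m - k)); pose proof (INR_fact_neq_0 m).
  pose proof (pow_nonzero lam k ltac:(lra)); pose proof (pow_nonzero lam (m - k) ltac:(lra)).
  pose proof (pow_nonzero t k Ht).
  field; repeat split; auto.
Qed.

(** * Limit of the probability generating function *)

Lemma qrising_1 a b : qrising 1 a b = falling (INR (a + b)) b.
Proof.
  induction b as [|b IH]; [reflexivity|].
  simpl qrising; simpl falling; rewrite IH, qint_1.
  replace (INR (a + S b) - 1) with (INR (a + b)) by (rewrite Nat.add_succ_r, S_INR; ring); ring.
Qed.

Lemma neg_qfalling_1 n k : (k <= n)%nat -> neg_qfalling 1 n k = (-1) ^ k * falling (INR n) k.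
Proof.
  induction k as [|k IH]; intro Hk; [simpl; ring|].
  simpl neg_qfalling; rewrite IH, falling_S_r, qint_1, pow1, minus_INR by lia; simpl; field.
Qed.

Lemma wall_red_1 lam n d : wall_red 1 lam n d = charlier lam n (INR (d + n)).
Proof.
  unfold wall_red, charlier; apply sum_eq; intros k Hk.
  rewrite neg_qfalling_1, qrising_1, qfact_1, pow1 by exact Hk.
  replace (d + k + (n - k))%nat with (d + n)%nat by lia.
  unfold binomR; replace (- lam) with (-1 * lam) by ring; rewrite Rpow_mult_distr.
  field; apply INR_fact_neq_0.
Qed.

Lemma continuous_neg_qfalling n k (x : R) : x <> 0 -> continuous (fun q => neg_qfalling q n k) x.
Proof.
  intro Hx; induction k as [|k IH]; [apply continuous_const|].
  apply (continuous_Rmult _ _ _ IH), continuous_Rdiv;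
    [|apply continuous_Rpow, continuous_id|apply pow_nonzero, Hx].
  apply (continuous_opp (V := R_NormedModule)), continuous_qint.
Qed.

Lemma continuous_qrising a b (x : R) : continuous (fun q => qrising q a b) x.
Proof.
  induction b as [|b IH]; [apply continuous_const|].
  exact (continuous_Rmult _ _ _ IH (continuous_qint _ x)).
Qed.

Lemma continuous_wall_red lam n d : continuous (fun q => wall_red q lam n d) 1.
Proof.
  apply continuous_sum_f_R0; intros k Hk; apply continuous_Rdiv;
    [|apply continuous_qfact|rewrite qfact_1; apply INR_fact_neq_0].
  apply continuous_Rmult; [|apply continuous_const].
  apply continuous_Rmult; [|apply continuous_Rpow, continuous_id].
  apply continuous_Rmult; [apply continuous_neg_qfalling, R1_neq_R0|apply continuous_qrising].
Qed.

Lemma continuous_pj_num lam m j : continuous (pj_num lam m j) 1.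
Proof.
  apply continuous_Rdiv.
  - apply continuous_Rmult; [|apply continuous_Rpow, continuous_wall_red].
    apply continuous_Rmult; [apply continuous_Rpow, continuous_id|apply continuous_const].
  - apply continuous_Rmult; [|apply continuous_qfact].
    apply continuous_Rmult; [apply continuous_Rpow, continuous_id|apply continuous_qfact].
  - rewrite pow1, !qfact_1; pose proof (INR_fact_neq_0 j); pose proof (INR_fact_neq_0 m).
    apply Rmult_integral_contrapositive; split; [|assumption].
    apply Rmult_integral_contrapositive; split; [lra|assumption].
Qed.

Lemma pj_limit lam m j :
  filterlim (fun q => pj lam q m j) (at_left 1) (locally (exp (- lam) * pj_num lam m j 1)).
Proof.
  apply (filterlim_ext_loc (fun q => / Nqm q m lam * pj_num lam m j q)).
  - generalize (at_left_interval 0 1 Rlt_0_1); apply filter_imp.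
    intros q Hq; symmetry; apply pj_eq, Hq.
  - apply filterlim_Rmult_comp; [apply inv_Nqm_limit|].
    apply filterlim_at_left_continuous, continuous_pj_num.
Qed.

Lemma pj_num_1 lam m t j : 0 < lam ->
  t ^ j * pj_num lam m j 1
  = / lam ^ m * / INR (fact m) * charlier_term lam (lam * t) m m j.
Proof.
  intro Hl.
  replace (charlier_term lam (lam * t) m m j)
    with ((lam * t) ^ j / INR (fact j) * charlier lam m (INR j) ^ 2)
    by (unfold charlier_term; ring).
  unfold pj_num; rewrite !pow1, !qfact_1, wall_red_1, Rpow_mult_distr.
  pose proof (INR_fact_neq_0 j); pose proof (INR_fact_neq_0 m).
  destruct (Compare_dec.le_lt_dec m j) as [Hmj|Hmj].
  - replace (Nat.min m j) with m by lia;
    replace (absdiff m j) with (j - m)%nat by (unfold absdiff; lia).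
    replace (j - m + m)%nat with j by lia.
    replace (lam ^ j) with (lam ^ (j - m) * lam ^ m) by (rewrite <- pow_add; f_equal; lia).
    pose proof (pow_nonzero lam m ltac:(lra)).
    field; auto.
  - replace (Nat.min m j) with j by lia;
    replace (absdiff m j) with (m - j)%nat by (unfold absdiff; lia).
    replace (m - j + j)%nat with m by lia.
    rewrite (charlier_sym lam m j), Rpow_mult_distr, <- pow_mult, Nat.mul_comm, pow_mult by lia.
    replace ((- lam) ^ 2) with (lam ^ 2) by ring; rewrite <- pow_mult.
    replace (lam ^ (2 * (m - j))) with (lam ^ (m - j) * lam ^ (m - j))
      by (rewrite <- pow_add; f_equal; lia).
    replace (lam ^ m) with (lam ^ j * lam ^ (m - j)) by (rewrite <- pow_add; f_equal; lia).
    pose proof (pow_nonzero lam j ltac:(lra)); pose proof (pow_nonzero lam (m - j) ltac:(lra)).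
    field; auto.
Qed.

Lemma inv_pow_le_pow2 q n : 1 / 2 <= q -> / q ^ n <= 2 ^ n.
Proof.
  intro Hq; rewrite <- (Rinv_inv 2), pow_inv.
  apply Rinv_le_contravar; [apply pow_lt; lra|apply pow_incr; lra].
Qed.

Lemma neg_qfalling_bound q m k : 1 / 2 <= q <= 1 -> (k <= m)%nat ->
  Rabs (neg_qfalling q m k) <= (INR m * 2 ^ m) ^ k.
Proof.
  intro Hq; induction k as [|k IH]; intro Hk; simpl; [rewrite Rabs_R1; lra|].
  rewrite Rabs_mult, Rmult_comm.
  apply Rmult_le_compat; try apply Rabs_pos; [|apply IH; lia].
  unfold Rdiv; rewrite Rabs_mult, Rabs_Ropp, Rabs_inv, Rabs_pos_eq, (Rabs_pos_eq (q ^ _))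
    by (apply pow_le || apply qint_ge0; lra).
  apply Rmult_le_compat; [apply qint_ge0; lra|apply Rlt_le, Rinv_0_lt_compat, pow_lt; lra| |].
  - apply Rle_trans with (INR (m - k)); [apply qint_le; lra|apply le_INR; lia].
  - apply Rle_trans with (2 ^ (m - k)); [apply inv_pow_le_pow2; lra|apply Rle_pow; [lra|lia]].
Qed.

Lemma qrising_le q a b : 0 <= q <= 1 -> qrising q a b <= INR (a + b) ^ b.
Proof.
  intro Hq; induction b as [|b IH]; simpl; [lra|].
  rewrite Rmult_comm; apply Rmult_le_compat;
    [apply qint_ge0; lra|pose proof (qrising_ge1 q a b); lra|apply qint_le; lra|].
  apply Rle_trans with (INR (a + b) ^ b); [exact IH|].
  apply pow_incr; split; [apply pos_INR|apply le_INR; lia].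
Qed.

Lemma wall_red_bound q lam m d : 1 / 2 <= q <= 1 -> 0 < lam ->
  Rabs (wall_red q lam m d)
  <= qrising q d m * sum_f_R0 (fun k => (INR m * 2 ^ m * lam) ^ k) m.
Proof.
  intros Hq Hl; unfold wall_red.
  eapply Rle_trans; [apply sum_f_R0_triangle|]; rewrite scal_sum; apply sum_Rle; intros k Hk.
  pose proof (qfact_ge1 q k ltac:(lra)); pose proof (qrising_ge1 q (d + k) (m - k) ltac:(lra)).
  assert (Hr : qrising q (d + k) (m - k) <= qrising q d m).
  { replace m with (k + (m - k))%nat at 2 by lia; rewrite qrising_add.
    pose proof (qrising_ge1 q d k ltac:(lra)); nra. }
  unfold Rdiv; rewrite !Rabs_mult, Rabs_inv, (Rabs_pos_eq (qrising _ _ _)), (Rabs_pos_eq (q ^ k)),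
    (Rabs_pos_eq (lam ^ k)), (Rabs_pos_eq (qfact q k)), !Rpow_mult_distr
    by (try apply pow_le; lra).
  pose proof (neg_qfalling_bound q m k Hq Hk); rewrite Rpow_mult_distr in H1.
  pose proof (pow_le_1 q k ltac:(lra)); pose proof (pow_le q k ltac:(lra)).
  pose proof (pow_le lam k ltac:(lra)).
  assert (/ qfact q k <= 1) by (rewrite <- Rinv_1; apply Rinv_le_contravar; lra).
  assert (0 <= / qfact q k) by (apply Rlt_le, Rinv_0_lt_compat; lra).
  pose proof (pow_le (INR m) k (pos_INR m)); pose proof (pow_le (2 ^ m) k (pow_le 2 m ltac:(lra))).
  pose proof (Rabs_pos (neg_qfalling q m k)).
  apply Rle_trans with
    (INR m ^ k * (2 ^ m) ^ k * qrising q d m * 1 * lam ^ k * 1); [|right; ring].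
  repeat (apply Rmult_le_compat; [repeat apply Rmult_le_pos; lra|lra| |lra]); exact H1.
Qed.

Lemma pow2_ge_succ d : INR d + 1 <= 2 ^ d.
Proof.
  induction d as [|d IH]; [simpl; lra|].
  rewrite S_INR; simpl; pose proof (pow_R1_Rle 2 d ltac:(lra)); lra.
Qed.

Lemma qrising_le_geom q d m : 0 <= q <= 1 -> qrising q d m <= INR (m + 1) ^ m * (2 ^ m) ^ d.
Proof.
  intro Hq; eapply Rle_trans; [apply qrising_le, Hq|].
  rewrite <- pow_mult, Nat.mul_comm, pow_mult, <- Rpow_mult_distr; apply pow_incr.
  split; [apply pos_INR|]; rewrite !plus_INR; simpl INR.
  pose proof (pow2_ge_succ d); pose proof (pos_INR d); pose proof (pos_INR m); nra.
Qed.

Lemma pj_num_shift_le_qrising lam m d q : 0 < lam -> 1 / 2 <= q <= 1 ->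
  pj_num lam m (m + d) q
  <= (sum_f_R0 (fun k => (INR m * 2 ^ m * lam) ^ k) m) ^ 2 * 2 ^ (m * (m + d)) * lam ^ d
     * qrising q d m / qfact q d.
Proof.
  intros Hl Hq; unfold pj_num.
  replace (Nat.min m (m + d)) with m by lia.
  replace (absdiff m (m + d)) with d by (unfold absdiff; lia).
  rewrite (Nat.add_comm m d) at 2; rewrite qfact_add.
  set (C := sum_f_R0 _ m); set (V := wall_red q lam m d).
  set (R := qrising q d m); set (Q := qfact q d).
  pose proof (qrising_ge1 q d m ltac:(lra)) as HR; fold R in HR.
  pose proof (qfact_ge1 q d ltac:(lra)) as HQ; fold Q in HQ.
  pose proof (qfact_ge1 q m ltac:(lra)) as HQm.
  assert (HV : V ^ 2 <= (R * C) ^ 2).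
  { rewrite <- (pow2_abs V); apply pow_incr.
    split; [apply Rabs_pos|apply wall_red_bound; assumption]. }
  assert (Hqe : 0 <= q ^ (2 * binom2 m) <= 1) by (split; [apply pow_le|apply pow_le_1]; lra).
  assert (Hqi : / q ^ (m * (m + d)) <= 2 ^ (m * (m + d))) by (apply inv_pow_le_pow2; lra).
  assert (Hm1 : / qfact q m <= 1) by (rewrite <- Rinv_1; apply Rinv_le_contravar; lra).
  pose proof (pow_le lam d ltac:(lra)); pose proof (pow_le 2 (m * (m + d)) ltac:(lra)).
  pose proof (Rinv_0_lt_compat Q ltac:(lra)); pose proof (Rinv_0_lt_compat R ltac:(lra)).
  pose proof (pow2_ge_0 V); pose proof (Rinv_0_lt_compat (qfact q m) ltac:(lra)).
  pose proof (Rinv_0_lt_compat (q ^ (m * (m + d))) (pow_lt q _ ltac:(lra))).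
  apply Rle_trans with (1 * lam ^ d * (R * C) ^ 2 * 2 ^ (m * (m + d)) * 1 * (/ Q * / R));
    [|right; field; lra].
  unfold Rdiv; rewrite !Rinv_mult.
  replace (q ^ (2 * binom2 m) * lam ^ d * V ^ 2
           * (/ q ^ (m * (m + d)) * (/ Q * / R) * / qfact q m))
    with (q ^ (2 * binom2 m) * lam ^ d * V ^ 2 * / q ^ (m * (m + d)) * / qfact q m * (/ Q * / R))
    by ring.
  apply Rmult_le_compat_r; [apply Rmult_le_pos; lra|].
  repeat (apply Rmult_le_compat; [repeat (lra || apply Rmult_le_pos)|lra| |lra]); lra.
Qed.

Lemma pj_num_shift_le lam m d q : 0 < lam -> 1 / 2 <= q <= 1 ->
  pj_num lam m (m + d) q
  <= (sum_f_R0 (fun k => (INR m * 2 ^ m * lam) ^ k) m) ^ 2 * INR (m + 1) ^ m * 2 ^ (m * m)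
     * ((lam * 2 ^ m * 2 ^ m) ^ d / qfact q d).
Proof.
  intros Hl Hq; eapply Rle_trans; [apply pj_num_shift_le_qrising; assumption|].
  set (C := sum_f_R0 _ m).
  pose proof (qfact_ge1 q d ltac:(lra)).
  replace (2 ^ (m * (m + d))) with (2 ^ (m * m) * (2 ^ m) ^ d)
    by (rewrite <- pow_mult, <- pow_add; f_equal; lia).
  apply Rle_trans with (C ^ 2 * (2 ^ (m * m) * (2 ^ m) ^ d) * lam ^ d
                        * (INR (m + 1) ^ m * (2 ^ m) ^ d) / qfact q d);
    [|right; rewrite !Rpow_mult_distr; field; lra].
  unfold Rdiv; apply Rmult_le_compat_r; [apply Rlt_le, Rinv_0_lt_compat; lra|].
  apply Rmult_le_compat_l; [|apply qrising_le_geom; lra].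
  pose proof (pow2_ge_0 C); repeat (lra || apply pow_le || apply Rmult_le_pos).
Qed.

Lemma pj_num_nonneg lam m j q : 0 < q -> 0 < lam -> 0 <= pj_num lam m j q.
Proof.
  intros Hq Hl; unfold pj_num, Rdiv.
  pose proof (qfact_pos q j ltac:(lra)); pose proof (qfact_pos q m ltac:(lra)).
  pose proof (pow_lt q (m * j) Hq).
  pose proof (pow2_ge_0 (wall_red q lam (Nat.min m j) (absdiff m j))).
  pose proof (pow_le q (2 * binom2 (Nat.min m j)) ltac:(lra)).
  pose proof (pow_le lam (absdiff m j) ltac:(lra)).
  apply Rmult_le_pos; [repeat (lra || apply Rmult_le_pos)|].
  apply Rlt_le, Rinv_0_lt_compat; repeat apply Rmult_lt_0_compat; lra.
Qed.

Lemma pj_num_geom_eventually lam m : 0 < lam ->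
  exists B, at_left 1 (fun q => forall d, pj_num lam m (m + d) q <= B * (/ 2) ^ d).
Proof.
  intro Hl.
  assert (HA : 0 <= lam * 2 ^ m * 2 ^ m) by (pose proof (pow_lt 2 m ltac:(lra)); nra).
  destruct (qfact_geom_eventually _ HA) as [K HK].
  set (Cst := (sum_f_R0 (fun k => (INR m * 2 ^ m * lam) ^ k) m) ^ 2
              * INR (m + 1) ^ m * 2 ^ (m * m)).
  assert (HCst : 0 <= Cst).
  { unfold Cst; pose proof (pow_le 2 (m * m) ltac:(lra)); pose proof (pow_le _ m (pos_INR (m + 1))).
    pose proof (pow2_ge_0 (sum_f_R0 (fun k => (INR m * 2 ^ m * lam) ^ k) m)).
    repeat (lra || apply Rmult_le_pos). }
  exists (Cst * K).
  generalize (filter_and _ _ HK (at_left_interval (1 / 2) 1 ltac:(lra))); apply filter_imp.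
  intros q [HKq Hq] d.
  apply Rle_trans with (Cst * ((lam * 2 ^ m * 2 ^ m) ^ d / qfact q d));
    [apply pj_num_shift_le; lra|].
  replace (Cst * K * (/ 2) ^ d) with (Cst * (K * (/ 2) ^ d)) by ring.
  apply Rmult_le_compat_l; [exact HCst|apply HKq].
Qed.

Lemma pgf_terms_dominated lam m t : 0 < lam -> Rabs t <= 1 ->
  exists M : nat -> R, ex_series M /\
    at_left 1 (fun q => forall j, (m <= j)%nat -> Rabs (t ^ j * pj lam q m j) <= M j).
Proof.
  intros Hl Ht.
  destruct (pj_num_geom_eventually lam m Hl) as [B HB].
  set (E := exp (- lam) + 1).
  assert (HN : at_left 1 (fun q => Rabs (/ Nqm q m lam) < E)).
  { apply (filterlim_gt_eventually _ (Rabs (exp (- lam)))).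
    - exact (filterlim_continuous_comp _ Rabs _ (inv_Nqm_limit m lam) (continuous_Rabs _)).
    - unfold E; rewrite Rabs_pos_eq by (apply Rlt_le, exp_pos); lra. }
  exists (fun j => E * B * 2 ^ m * (/ 2) ^ j); split.
  { apply (ex_series_scal_l (V := R_NormedModule)); eexists; apply is_series_geom.
    rewrite Rabs_pos_eq; lra. }
  generalize (filter_and _ _ (filter_and _ _ HN HB) (at_left_interval 0 1 Rlt_0_1)).
  apply filter_imp; intros q [[HNq HBq] Hq] j Hj.
  replace j with (m + (j - m))%nat by lia; set (d := (j - m)%nat).
  rewrite pj_eq, !Rabs_mult, (Rabs_pos_eq (pj_num _ _ _ _)), <- RPow_abs
    by (assumption || apply pj_num_nonneg; lra).
  replace (E * B * 2 ^ m * (/ 2) ^ (m + d)) with (1 * (E * (B * (/ 2) ^ d)))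
    by (rewrite pow_add, !pow_inv; field; split; apply pow_nonzero; lra).
  pose proof (pj_num_nonneg lam m (m + d) q ltac:(lra) Hl); pose proof (HBq d).
  pose proof (Rabs_pos (/ Nqm q m lam)); pose proof (pow_le (Rabs t) (m + d) (Rabs_pos t)).
  apply Rmult_le_compat; [lra|apply Rmult_le_pos; lra|apply pow_le_1; split; [apply Rabs_pos|lra]|].
  apply Rmult_le_compat; lra.
Qed.

Lemma Series_pgf_limit_terms lam m t : 0 < lam -> t <> 0 ->
  Series (fun j => t ^ j * (exp (- lam) * pj_num lam m j 1))
  = t ^ m * exp (lam * (t - 1)) * laguerre0 m (lam * (2 - (t + / t))).
Proof.
  intros Hl Ht.
  rewrite (Series_ext _ (fun j => exp (- lam) * / lam ^ m * / INR (fact m)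
                                  * charlier_term lam (lam * t) m m j)).
  - rewrite Series_scal_l, (is_series_unique _ _ (is_series_charlier_term lam (lam * t) m m)).
    apply charlier_prod_sum_laguerre; assumption.
  - intro j; transitivity (exp (- lam) * (t ^ j * pj_num lam m j 1)); [ring|].
    rewrite pj_num_1 by exact Hl; ring.
Qed.

Lemma pgf_limit m lam t : 0 < lam -> 0 < Rabs t <= 1 ->
  filterlim (fun q => pgf lam q m t) (at_left 1)
    (locally (t ^ m * exp (lam * (t - 1)) * laguerre0 m (lam * (2 - (t + / t))))).
Proof.
  intros Hl Ht.
  assert (Ht0 : t <> 0) by (intro H; rewrite H, Rabs_R0 in Ht; lra).
  destruct (pgf_terms_dominated lam m t Hl (proj2 Ht)) as [M [HM Hdom]].
  rewrite <- Series_pgf_limit_terms by assumption.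
  apply (filterlim_Series_dominated _ _ _ M m HM); [|exact Hdom].
  intro j; apply filterlim_Rmult_comp; [apply filterlim_const|apply pj_limit].
Qed.

Theorem mainTheorem2 :
  (forall (q lam t : R),
      0 < q < 1 -> 0 < lam < q ^ 0 / (1 - q) -> Rabs t <= 1 ->
      pgf lam q 0 t =
        (qpoch_inf ((1 - q) * lam) q / qpoch_inf ((1 - q) * lam * t) q))
  /\
  (forall (m : nat) (lam t : R),
      m <> 0%nat -> 0 < lam -> 0 < Rabs t <= 1 ->
      filterlim (fun q => pgf lam q m t) (at_left 1)
        (locally (t ^ m * exp (lam * (t - 1))
                  * laguerre0 m (lam * (2 - (t + / t)))))).
Proof.
  split.
  - intros q lam t; apply pgf_0.
  - (* The limit formula holds for [m = 0] as well. *)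
    intros m lam t _; apply pgf_limit.
Qed.
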